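(* There is an absolute constant $C>0$ such that for every sufficiently large prime $p$ and every $f:\mathbb{F}_p\to\mathbb{C}$, $$\Big|\sum_{\substack{x_1,x_2,x_3\in\mathbb{F}_p\\ x_1\neq x_3}} f(x_1)\,\overline{f(x_3)}\,\overline{f(x_2)}\,f(x_2+x_3-x_1)\,K_1(x_1,x_2,x_3)\Big|\le C\,p^{-3/4}\,\|f\|_2^4 .$$
   Context: Let $p$ be an odd prime, $e_p(x)=e^{-2\pi i x/p}$ for $x\in\mathbb{F}_p$, $\|f\|_2=\big(\sum_{x\in\mathbb{F}_p}|f(x)|^2\big)^{1/2}$. For $x_1,x_2,x_3\in\mathbb{F}_p$ and $y_1,y_2,y_3\in\mathbb{F}_p$ set $$R_1=x_1y_1^2-x_2y_2^2-x_3y_3^2+(x_3+x_2-x_1)(y_2+y_3-y_1)^2+(x_2-x_1)(y_1-y_3),$$ and define $K_1(x_1,x_2,x_3)=p^{-3}\sum_{y_1,y_2,y_3\in\mathbb{F}_p}e_p(R_1)$. *)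

From HB Require Import structures.
From mathcomp Require Import all_boot all_order all_algebra.
From mathcomp Require Import Rstruct.
From mathcomp.real_closed Require Import complex.
From Stdlib Require Import Reals.
Set Implicit Arguments. Unset Strict Implicit. Unset Printing Implicit Defensive.
Import Order.TTheory GRing.Theory Num.Theory.
Local Open Scope ring_scope.

Notation Cx := (complex R).

(* e_p(x) = exp(-2 pi i x / p), x in F_p represented by its value in [0,p) *)
Definition ep (p : nat) (x : 'F_p) : Cx :=
  let t : R := (2 * PI * INR (val x) / INR p)%R in
  Complex (cos t) (- sin t)%R.

Definition R1 (p : nat) (x1 x2 x3 y1 y2 y3 : 'F_p) : 'F_p :=
  x1 * y1 ^+ 2 - x2 * y2 ^+ 2 - x3 * y3 ^+ 2
  + (x3 + x2 - x1) * (y2 + y3 - y1) ^+ 2 + (x2 - x1) * (y1 - y3).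

Definition K1 (p : nat) (x1 x2 x3 : 'F_p) : Cx :=
  (p%:R ^- 3) * \sum_(y1 : 'F_p) \sum_(y2 : 'F_p) \sum_(y3 : 'F_p)
      ep (R1 x1 x2 x3 y1 y2 y3).

Definition norm2 (p : nat) (f : 'F_p -> Cx) : Cx :=
  sqrtC (\sum_(x : 'F_p) `|f x| ^+ 2).

Definition Ssum (p : nat) (f : 'F_p -> Cx) : Cx :=
  \sum_(x1 : 'F_p) \sum_(x2 : 'F_p) \sum_(x3 : 'F_p | x1 != x3)
     f x1 * conjc (f x3) * conjc (f x2) * f (x2 + x3 - x1) * K1 x1 x2 x3.

From Pilot Require Import Defs.
From HB Require Import structures.
From mathcomp Require Import all_boot all_order all_algebra.
From mathcomp Require Import Rstruct.
From mathcomp.real_closed Require Import complex.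
From Stdlib Require Import Reals.
From mathcomp.algebra_tactics Require Import ring lra.
Import Order.TTheory GRing.Theory Num.Theory.
Local Open Scope ring_scope.

(* For x1 <> x3 the y2- and y3-sums in K1 are Gauss sums of product p, so
   K1 = p^-2 sum_v e_p((x2 - x1)(x3 - x1)(v - (x2 + x3) v^2)); on the diagonal
   x1 = x3 this expression equals 1/p.  Completing the sum with the diagonal and
   writing x1 = s/2 - a, x2 = s/2 + b, x3 = s/2 - b, the factor (x2 - x1)(x3 - x1)
   becomes a^2 - b^2 and the completed sum is
     p^-2 sum_s sum_v |sum_a f(s/2 - a) f(s/2 + a) e_p(a^2 (v - s v^2))|^2 >= 0.
   Since v |-> v - s v^2 and a |-> a^2 are at most two-to-one, Parseval bounds it
   by 4 p^-1 ||f||_2^4, and the diagonal only contributes p^-1 ||f||_2^4.  Hence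
   the sum is at most 5 p^-1 ||f||_2^4, which is stronger than claimed. *)

Lemma card_quadratic_preimage {F : finFieldType} {k m : F} (w : F) : (k != 0) || (m != 0) ->
  leq #|[pred v | k * v ^+ 2 + m * v == w]| 2.
Proof.
move=> km; set q : {poly F} := k *: 'X^2 + m *: 'X - w%:P.
have qE v : root q v = (k * v ^+ 2 + m * v == w).
  by rewrite rootE !hornerE subr_eq0.
have q_neq0 : q != 0.
  apply: contraTneq km => q0; have := congr1 (coefp 2) q0; have := congr1 (coefp 1) q0.
  by rewrite /= !coefE /= !mulr1 !mulr0 !subr0 !addr0 add0r => -> ->; rewrite eqxx.
have size_q : (size q <= 3)%nat.
  rewrite /q -addrA; apply: leq_trans (size_polyD _ _) _; rewrite geq_max.
  rewrite (leq_trans (size_scale_leq _ _)) ?size_polyXn //.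
  apply: leq_trans (size_polyD _ _) _; rewrite geq_max.
  by rewrite (leq_trans (size_scale_leq _ _)) ?size_polyX // size_polyN size_polyC; case: (w != 0).
rewrite -ltnS cardE; apply: leq_trans size_q; apply: max_poly_roots q_neq0 _ (enum_uniq _).
by apply/allP => v; rewrite mem_enum inE qE.
Qed.

Lemma sum_quadratic_comp_le {F : finFieldType} {R : numDomainType} {k m : F} (g : F -> R) :
  (k != 0) || (m != 0) -> (forall w, 0 <= g w) ->
  \sum_v g (k * v ^+ 2 + m * v) <= 2 * \sum_w g w.
Proof.
move=> km g_ge0; rewrite (partition_big (fun v => k * v ^+ 2 + m * v) predT) //=.
rewrite mulr_sumr; apply: ler_sum => w _.
rewrite (eq_bigr (fun=> g w)) => [|v /eqP -> //].
rewrite (sumr_const [pred v | k * v ^+ 2 + m * v == w]) mulr_natl.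
exact: ler_wpMn2l (g_ge0 w) _ _ (card_quadratic_preimage w km).
Qed.

Lemma affine_inj {F : fieldType} (y : F) {k : F} : k != 0 -> injective (fun v => y + k * v).
Proof. by move=> k0 u v /addrI /(mulfI k0). Qed.

Lemma sum_midpoint {F : finFieldType} {V : nmodType} (two_neq0 : (2 : F) != 0)
    (H : F -> F -> V) :
  \sum_x \sum_y H x y = \sum_s \sum_b H (s / 2 + b) (s / 2 - b).
Proof.
rewrite !pair_big (reindex (fun sb => (sb.1 / 2 + sb.2, sb.1 / 2 - sb.2))) //=.
apply: onW_bij; exists (fun xy : F * F => (xy.1 + xy.2, (xy.1 - xy.2) / 2)) => -[s b] /=.
  by congr pair; field.
by congr pair; field.
Qed.

Lemma sum_midpoint3 {F : finFieldType} {V : nmodType} (two_neq0 : (2 : F) != 0)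
    (G : F -> F -> F -> V) :
  \sum_x1 \sum_x2 \sum_x3 G x1 x2 x3 =
  \sum_s \sum_b \sum_a G (s / 2 - a) (s / 2 + b) (s / 2 - b).
Proof.
rewrite exchange_big /=; under eq_bigr do rewrite exchange_big /=.
rewrite (sum_midpoint two_neq0 (fun x2 x3 => \sum_x1 G x1 x2 x3)).
by apply: eq_bigr => s _; apply: eq_bigr => b _; rewrite (reindex_inj (subrI (s / 2))).
Qed.

Lemma conjcM (K : rcfType) (x y : K[i]) : (x * y)^*%C = x^*%C * y^*%C.
Proof. exact: rmorphM. Qed.

Lemma sum_normsq_sum (K : rcfType) (I J : finType) (X : I -> J -> K[i]) :
  \sum_j `|\sum_i X i j| ^+ 2 = \sum_i' \sum_i \sum_j X i j * (X i' j)^*%C.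
Proof.
under eq_bigr do rewrite sqr_normc rmorph_sum mulr_sumr.
rewrite exchange_big /=; apply: eq_bigr => i' _; rewrite exchange_big /=.
by apply: eq_bigr => j _; rewrite mulr_suml.
Qed.

Section PrimeField.
Context {p : nat}.
Hypotheses (p_pr : prime p) (p_gt2 : (2 < p)%nat).

Lemma val_addFp (a b : 'F_p) : val (a + b) = ((val a + val b) %% p)%nat.
Proof. by rewrite /=; congr (_ %% _)%nat; exact: Fp_cast. Qed.

Lemma epD (a b : 'F_p) : ep (a + b) = ep a * ep b.
Proof.
have p0 : INR p <> 0%R by apply: not_0_INR; apply/eqP; rewrite -lt0n prime_gt0.
rewrite /ep val_addFp.
set A := (2 * PI * INR (val a) / INR p)%R.
set B := (2 * PI * INR (val b) / INR p)%R.
set r := ((val a + val b) %% p)%nat.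
set q := ((val a + val b) %/ p)%nat.
have AB : (A + B = 2 * PI * INR r / INR p + 2 * INR q * PI)%R.
  have e : (INR (val a) + INR (val b) = INR r + INR q * INR p)%R.
    rewrite -mult_INR -!plus_INR; congr INR.
    by rewrite !plusE multE /r /q [in RHS]addnC -divn_eq.
  rewrite /A /B; field_simplify_eq => //; rewrite -Rmult_plus_distr_l e ?RealsE; ring.
have -> : cos (2 * PI * INR r / INR p) = cos (A + B) by rewrite AB cos_period.
have -> : sin (2 * PI * INR r / INR p) = sin (A + B) by rewrite AB sin_period.
by rewrite cos_plus sin_plus /=; congr Complex; rewrite ?RealsE; ring.
Qed.

Lemma ep_conj (a : 'F_p) : ep a * (ep a)^*%C = 1.
Proof.
rewrite /ep /=; set t := (2 * PI * _ / _)%R.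
have := sin2_cos2 t; rewrite /Rsqr ?RealsE => h.
by apply/eqP; rewrite eq_complex /= ?RealsE; apply/andP; split; apply/eqP; [rewrite -h|]; ring.
Qed.

Lemma ep_neq0 (a : 'F_p) : ep a != 0.
Proof. by apply: contra_eqN (ep_conj a) => /eqP ->; rewrite mul0r eq_sym oner_eq0. Qed.

Lemma ep0 : ep (0 : 'F_p) = 1.
Proof. by apply: (mulfI (ep_neq0 0)); rewrite mulr1 -epD addr0. Qed.

Lemma epN (a : 'F_p) : ep (- a) = (ep a)^*%C.
Proof. by apply: (mulfI (ep_neq0 a)); rewrite ep_conj -epD subrr ep0. Qed.

Lemma ep1_neq1 : ep (1 : 'F_p) != 1.
Proof.
have val1 : val (1 : 'F_p) = 1%nat by rewrite /= (Fp_cast p_pr) modn_small ?prime_gt1.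
rewrite /ep val1 eq_complex /= negb_and; apply/orP; right.
have hp : (2 < p%:R :> R) by rewrite ltr_nat.
have pi0 : 0 < PI by apply/RltP; exact: PI_RGT_0.
suff s0 : 0 < sin (2 * PI * INR 1 / INR p) by rewrite oppr_eq0 gt_eqF.
apply/RltP; apply: sin_gt_0; apply/RltP; rewrite !RealsE mulr1 (_ : (nat_of_pos 2)%:R = 2 :> R) //.
  by apply: divr_gt0; [apply: mulr_gt0 | lra].
by rewrite ltr_pdivrMr; [nra | lra].
Qed.

Lemma sum_ep : \sum_(z : 'F_p) ep z = 0.
Proof.
set S := \sum_(z : 'F_p) ep z.
have shiftS : ep (1 : 'F_p) * S = S.
  rewrite /S mulr_sumr [RHS](reindex_inj (addrI (1 : 'F_p))) /=.
  by apply: eq_bigr => z _; rewrite epD.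
have : (ep (1 : 'F_p) - 1) * S = 0 by rewrite mulrBl shiftS mul1r subrr.
by move/eqP; rewrite mulf_eq0 subr_eq0 (negbTE ep1_neq1) => /eqP.
Qed.

Lemma sum_ep_mul (a : 'F_p) : \sum_(y : 'F_p) ep (a * y) = if a == 0 then p%:R else 0.
Proof.
have [->|a0] := eqVneq a 0.
  under eq_bigr do rewrite mul0r ep0.
  by rewrite sumr_const (card_Fp p_pr).
by rewrite -[RHS]sum_ep [RHS](reindex_inj (mulfI a0)).
Qed.

Lemma two_neq0 : (2 : 'F_p) != 0.
Proof. by rewrite -(dvdn_pcharf (pchar_Fp p_pr)) gtnNdvd. Qed.

Lemma sum_normsq_twisted (I : finType) (q : I -> 'F_p) (X : I -> Cx) :
  \sum_w `|\sum_a X a * ep (q a * w)| ^+ 2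
  = p%:R * \sum_a \sum_(b | q b == q a) X a * (X b)^*%C.
Proof.
rewrite sum_normsq_sum exchange_big mulr_sumr; apply: eq_bigr => a _.
rewrite [in RHS]big_mkcond mulr_sumr; apply: eq_bigr => b _.
have twist w : X a * ep (q a * w) * (X b * ep (q b * w))^*%C
               = X a * (X b)^*%C * ep ((q a - q b) * w).
  by rewrite conjcM -epN mulrACA -epD; congr (_ * ep _); ring.
under eq_bigr do rewrite twist; rewrite -mulr_sumr sum_ep_mul subr_eq0 eq_sym.
by case: ifP; rewrite ?mulr0 // mulrC.
Qed.

Lemma gauss_sum_pair {c : 'F_p} : c != 0 ->
  (\sum_y ep (- c * y ^+ 2)) * (\sum_z ep (c * z ^+ 2)) = p%:R.
Proof.
move=> c0; rewrite mulr_suml.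
under eq_bigr => y _ do rewrite mulr_sumr (reindex_inj (addrI y)) /=.
have shift y h : ep (- c * y ^+ 2) * ep (c * (y + h) ^+ 2)
                 = ep (c * h ^+ 2) * ep (2 * c * h * y).
  by rewrite -!epD; congr ep; ring.
under eq_bigr => y _ do under eq_bigr => h _ do rewrite shift.
rewrite exchange_big /=; under eq_bigr => h _ do rewrite -mulr_sumr sum_ep_mul.
rewrite (bigD1 0) //= big1 => [|h h0]; last first.
  by rewrite !mulf_eq0 (negbTE two_neq0) (negbTE c0) (negbTE h0) mulr0.
by rewrite !mulr0 eqxx expr0n mulr0 ep0 mul1r addr0.
Qed.

Lemma pnat_neq0 : (p%:R : Cx) != 0.
Proof. by rewrite pnatr_eq0 -lt0n prime_gt0. Qed.

Definition K1_reduced (x1 x2 x3 : 'F_p) : Cx :=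
  p%:R ^- 2 * \sum_v ep ((x2 - x1) * (x3 - x1) * (v - (x2 + x3) * v ^+ 2)).

Lemma K1_reducedE (x1 x2 x3 : 'F_p) : x1 != x3 -> K1 x1 x2 x3 = K1_reduced x1 x2 x3.
Proof.
move=> x13; set c := x3 - x1.
have c0 : c != 0 by rewrite subr_eq0 eq_sym.
have Nc0 : - c != 0 by rewrite oppr_eq0.
rewrite /K1 /K1_reduced.
under eq_bigr => y1 _ do rewrite exchange_big /= (reindex_inj (affine_inj y1 Nc0)) /=.
under eq_bigr => y1 _ do under eq_bigr => v _ do
  rewrite (reindex_inj (addrI ((x2 + c) * v))) /=.
rewrite exchange_big /=.
under eq_bigr => v _ do rewrite (reindex_inj (addrI ((x1 + c) * v))) /=.
have phase v y z :
  ep (Defs.R1 x1 x2 x3 ((x1 + c) * v + y) ((x2 + c) * v + z) ((x1 + c) * v + y + - c * v))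
  = ep ((x2 - x1) * (x3 - x1) * (v - (x2 + x3) * v ^+ 2)) *
    (ep (- c * y ^+ 2) * ep (c * z ^+ 2)).
  by rewrite -!epD; congr ep; rewrite /Defs.R1 /c; ring.
under eq_bigr => v _ do under eq_bigr => y _ do under eq_bigr => z _ do rewrite phase.
under eq_bigr => v _ do under eq_bigr => y _ do rewrite -mulr_sumr.
have gauss : \sum_y \sum_z ep (- c * y ^+ 2) * ep (c * z ^+ 2) = p%:R.
  by rewrite -(gauss_sum_pair c0) mulr_suml; apply: eq_bigr => y _; rewrite mulr_sumr.
under eq_bigr => v _ do rewrite -mulr_sumr gauss.
rewrite -mulr_suml [_ * p%:R]mulrC mulrA; congr (_ * _).
by field; exact: pnat_neq0.
Qed.

Lemma K1_reduced_diag (x1 x2 : 'F_p) : K1_reduced x1 x2 x1 = p%:R^-1.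
Proof.
rewrite /K1_reduced subrr mulr0.
under eq_bigr do rewrite mul0r ep0.
by rewrite sumr_const (card_Fp p_pr) -exprVn expr2 -mulrA mulVf ?mulr1 ?pnat_neq0.
Qed.

Lemma sum_normsq_square_twist_le (X : 'F_p -> Cx) : (forall a, X (- a) = X a) ->
  \sum_w `|\sum_a X a * ep (a ^+ 2 * w)| ^+ 2 <= 2 * p%:R * \sum_a `|X a| ^+ 2.
Proof.
move=> Xeven; rewrite (sum_normsq_twisted _ (fun a => a ^+ 2)) [2 * _]mulrC -mulrA.
apply: ler_wpM2l => //; rewrite mulr_sumr; apply: ler_sum => a _.
rewrite (eq_bigr (fun=> `|X a| ^+ 2)) => [|b]; last first.
  by rewrite eqf_sqr => /orP[] /eqP ->; rewrite ?Xeven sqr_normc.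
rewrite sumr_const mulr_natl ler_wpMn2l ?exprn_ge0 //.
apply: leq_trans (@card_quadratic_preimage _ 1 0 (a ^+ 2) _); last by rewrite oner_eq0.
by apply: subset_leq_card; apply/subsetP => b; rewrite !inE mul1r mul0r addr0.
Qed.

Section FourfoldSum.
Variable f : 'F_p -> Cx.

Definition sumsq : Cx := \sum_x `|f x| ^+ 2.

Definition fourfold (x1 x2 x3 : 'F_p) : Cx :=
  f x1 * (f x3)^*%C * (f x2)^*%C * f (x2 + x3 - x1).

Definition full_sum : Cx :=
  \sum_x1 \sum_x2 \sum_x3 fourfold x1 x2 x3 * K1_reduced x1 x2 x3.

Definition mirror_prod (s a : 'F_p) : Cx := f (s / 2 - a) * f (s / 2 + a).

Definition twisted_sum (s w : 'F_p) : Cx := \sum_a mirror_prod s a * ep (a ^+ 2 * w).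

Lemma Ssum_full_sum : Ssum f = full_sum - p%:R^-1 * sumsq ^+ 2.
Proof.
have diag x1 x2 : fourfold x1 x2 x1 * K1_reduced x1 x2 x1
                  = `|f x1| ^+ 2 * `|f x2| ^+ 2 * p%:R^-1.
  by rewrite K1_reduced_diag /fourfold addrK !sqr_normc; ring.
have row x1 x2 : \sum_(x3 | x1 != x3) fourfold x1 x2 x3 * K1 x1 x2 x3 =
    \sum_x3 fourfold x1 x2 x3 * K1_reduced x1 x2 x3 - `|f x1| ^+ 2 * `|f x2| ^+ 2 * p%:R^-1.
  rewrite [X in _ = X - _](bigD1 x1) //= diag addrC addrK.
  by apply: eq_big => [x3|x3 x13]; [rewrite eq_sym | rewrite K1_reducedE].
rewrite /Ssum; under eq_bigr do under eq_bigr do rewrite row.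
under eq_bigr do rewrite sumrB; rewrite sumrB; congr (_ - _).
rewrite expr2 mulrC !mulr_suml; apply: eq_bigr => x1 _.
by rewrite mulr_sumr mulr_suml; apply: eq_bigr => x2 _; ring.
Qed.

Lemma fourfold_K1_reduced_midpoint (s b a : 'F_p) :
  let Y c v := mirror_prod s c * ep (c ^+ 2 * (v - s * v ^+ 2)) in
  fourfold (s / 2 - a) (s / 2 + b) (s / 2 - b) * K1_reduced (s / 2 - a) (s / 2 + b) (s / 2 - b)
  = p%:R ^- 2 * \sum_v Y a v * (Y b v)^*%C.
Proof.
have two0 := two_neq0.
have sum_s : s / 2 + b + (s / 2 - b) = s by field.
have reflect_a : s - (s / 2 - a) = s / 2 + a by field.
rewrite /fourfold /K1_reduced sum_s reflect_a mulrCA mulr_sumr; congr (_ * _).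
apply: eq_bigr => v _; rewrite /mirror_prod !conjcM -epN mulrACA -epD.
by congr (_ * _); [ring | congr ep; ring].
Qed.

Lemma full_sumE :
  full_sum = p%:R ^- 2 * \sum_s \sum_v `|twisted_sum s (v - s * v ^+ 2)| ^+ 2.
Proof.
rewrite /full_sum (sum_midpoint3 two_neq0) mulr_sumr; apply: eq_bigr => s _.
under eq_bigr do under eq_bigr do rewrite fourfold_K1_reduced_midpoint.
rewrite /twisted_sum (sum_normsq_sum _ _ _
  (fun a v => mirror_prod s a * ep (a ^+ 2 * (v - s * v ^+ 2)))) mulr_sumr.
by apply: eq_bigr => b _; rewrite mulr_sumr.
Qed.

Lemma mirror_prodN (s a : 'F_p) : mirror_prod s (- a) = mirror_prod s a.
Proof. by rewrite /mirror_prod opprK mulrC. Qed.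

Lemma sum_normsq_mirror_prod : \sum_s \sum_a `|mirror_prod s a| ^+ 2 = sumsq ^+ 2.
Proof.
rewrite expr2 mulr_suml.
under [RHS]eq_bigr do rewrite mulr_sumr.
rewrite [RHS](sum_midpoint two_neq0); apply: eq_bigr => s _; apply: eq_bigr => a _.
by rewrite /mirror_prod normrM exprMn mulrC.
Qed.

Lemma full_sum_ge0 : 0 <= full_sum.
Proof.
rewrite full_sumE mulr_ge0 ?invr_ge0 ?exprn_ge0 ?ler0n //.
by apply: sumr_ge0 => s _; apply: sumr_ge0 => v _; rewrite exprn_ge0.
Qed.

Lemma full_sum_le : full_sum <= 4 * p%:R^-1 * sumsq ^+ 2.
Proof.
have p_inv2 : p%:R ^- 2 * (2 * (2 * p%:R)) = 4 * p%:R^-1 :> Cx.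
  by field; exact: pnat_neq0.
rewrite full_sumE -sum_normsq_mirror_prod -p_inv2 -mulrA; apply: ler_wpM2l.
  by rewrite invr_ge0 exprn_ge0 ?ler0n.
rewrite mulr_sumr; apply: ler_sum => s _; rewrite -mulrA.
have phase v : v - s * v ^+ 2 = - s * v ^+ 2 + 1 * v by ring.
under eq_bigr do rewrite phase.
apply: le_trans (sum_quadratic_comp_le (fun w => `|twisted_sum s w| ^+ 2) _ _) _.
- by rewrite oner_eq0 orbT.
- by move=> w; rewrite exprn_ge0.
by apply: ler_wpM2l => //; apply: sum_normsq_square_twist_le => a; exact: mirror_prodN.
Qed.

Lemma sumsq_ge0 : 0 <= sumsq.
Proof. by rewrite sumr_ge0 // => x _; rewrite exprn_ge0. Qed.

Lemma norm_Ssum_le : `|Ssum f| <= 5 * p%:R^-1 * sumsq ^+ 2.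
Proof.
rewrite Ssum_full_sum; apply: le_trans (ler_normB _ _) _.
rewrite ger0_norm ?full_sum_ge0 // ger0_norm ?mulr_ge0 ?exprn_ge0 ?invr_ge0 ?ler0n ?sumsq_ge0 //.
have -> : 5 * p%:R^-1 * sumsq ^+ 2 = 4 * p%:R^-1 * sumsq ^+ 2 + p%:R^-1 * sumsq ^+ 2.
  by ring.
exact: lerD full_sum_le (lexx _).
Qed.
End FourfoldSum.
End PrimeField.

Lemma inv_le_Rpower_opp (x a : R) : 1 <= x -> a <= 1 -> x^-1 <= Rpower x (- a).
Proof.
move=> x_ge1 a_le1; have x_pos : (0 < x)%R by apply/RltP; rewrite ?RealsE; lra.
have -> : x^-1 = Rpower x (- 1)%R by rewrite Rpower_Ropp Rpower_1 // RinvE.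
by apply/RleP/Rle_Rpower; apply/RleP; rewrite ?IZR_NEG ?RealsE //; lra.
Qed.

Theorem mainTheorem7 :
  exists C : R, (0 < C)%R /\
  exists P0 : nat, forall p : nat, prime p -> leq P0 p ->
    forall f : 'F_p -> Cx,
      `|Ssum f| <= Complex (C * Rpower (INR p) (- (3 / 4)))%R 0 * norm2 f ^+ 4.
Proof.
exists 5; split; first by apply/RltP; rewrite ltr0n.
exists 3%nat => p p_pr p_gt2 f.
apply: le_trans (norm_Ssum_le p_pr p_gt2 f) _.
have -> : norm2 f ^+ 4 = sumsq f ^+ 2 by rewrite /norm2 (_ : 4 = 2 * 2)%nat // exprM sqrtCK.
apply: ler_wpM2r; first by rewrite exprn_ge0 ?sumsq_ge0.
have -> : 5 * p%:R^-1 = ((5 * (INR p)^-1)%:C)%C :> Cx.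
  by rewrite INRE rmorphM fmorphV /= !rmorph_nat.
rewrite lecR ler_wpM2l //; apply: inv_le_Rpower_opp.
  by rewrite INRE ler1n prime_gt0.
by rewrite ?RealsE /=; lra.
Qed.
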